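(* Let $\mathcal B_1$ be an arbitrary set of mini-batches and let $f\in\mathcal F$ be a file with $(f,f)\in\mathcal B_1$. If $$n(f)\Bigl(l(f)+\sum_{b\in\mathcal B_1,\ l(b)<l(f)}s(b)\Bigr) < s(f)\Bigl(\sum_{f'\in\mathcal F,\ l(f')<l(f)}n(f')+\sum_{f'\in\mathcal F\setminus\mathcal F(\mathcal B_1),\ l(f')>l(f)}n(f')\Bigr),$$ then $v(\mathcal B_1\setminus\{(f,f)\})<v(\mathcal B_1)$.
   Context: A single-track tape stores a sequence of files $\mathcal F=(f_1,\dots,f_n)$ laid out contiguously from left to right: file $f$ occupies blocks $l(f),\dots,r(f)$, has size $s(f)=r(f)-l(f)+1$, $l(f_1)=1$, $l(f_{i+1})=r(f_i)+1$, and $m=\sum_f s(f)$. The tape moves one block per time step; at time $0$ the head is at position $m$. A file is read when the head traverses it rightwards from $l(f)$ to $r(f)$. $\mathcal R$ is a finite set of requests, all released at time $0$, each associated with a file; $n(f)$ is the number of requests for $f$. A request's response time is the time at which the head starts a rightward reading traversal of its file (all pending requests of a file are serviced simultaneously). A mini-batch is a pair $b=(f,f')$ of files with $l(f)\le l(f')$; $l(b)=l(f)$, $r(b)=r(f')$, $s(b)=r(b)-l(b)+1$, $\mathcal F(b)$ is the set of files $g$ with $l(b)\le l(g)$, $r(g)\le r(b)$, and $\mathcal F(\mathcal B_1)=\bigcup_{b\in\mathcal B_1}\mathcal F(b)$. Given a set $\mathcal B_1$ of mini-batches, its schedule is: Phase 1, the head moves leftwards from $m$ to $1$, and upon reaching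 $l(b)$ for $b\in\mathcal B_1$ executes $b$ (moves rightwards to $r(b)$, reading all files of $\mathcal F(b)$, and returns to $l(b)$), then continues leftwards; Phase 2, the head moves rightwards from $1$ to $m$ reading every file. $v(\mathcal B_1)$ is the total response time of this schedule. *)

From mathcomp Require Import all_boot.
Set Implicit Arguments. Unset Strict Implicit. Unset Printing Implicit Defensive.

(* Files are indexed by 'I_n (left to right); s i is the size of file i.     *)
Definition lpos (n : nat) (s : 'I_n -> nat) (i : 'I_n) : nat :=
  1 + \sum_(j < n | j < i) s j.
Definition rpos (n : nat) (s : 'I_n -> nat) (i : 'I_n) : nat :=
  lpos s i + s i - 1.
Definition tape_len (n : nat) (s : 'I_n -> nat) : nat := \sum_(j < n) s j.

Definition bl (n : nat) (s : 'I_n -> nat) (b : 'I_n * 'I_n) := lpos s b.1.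
Definition br (n : nat) (s : 'I_n -> nat) (b : 'I_n * 'I_n) := rpos s b.2.
Definition bsize (n : nat) (s : 'I_n -> nat) (b : 'I_n * 'I_n) :=
  br s b - bl s b + 1.

Definition inb (n : nat) (s : 'I_n -> nat) (b : 'I_n * 'I_n) (g : 'I_n) : bool :=
  (bl s b <= lpos s g) && (rpos s g <= br s b).
Definition inFB (n : nat) (s : 'I_n -> nat) (B : {set 'I_n * 'I_n}) (g : 'I_n) :=
  [exists b in B, inb s b g].

(* Time conventions: block k occupies the tape segment [k-1, k]; the head is  *)
(* at coordinate m at time 0 and moves one unit per time step.  Traversing a  *)
(* file of size s rightwards takes s steps, so executing a mini-batch b costs *)
(* 2 s(b) time units.  Mini-batches with the same left end are executed in   *)
(* increasing order of their right ends.                                       *)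
Definition exec_before (n : nat) (s : 'I_n -> nat) (b' b : 'I_n * 'I_n) : bool :=
  (bl s b < bl s b') || ((bl s b' == bl s b) && (br s b' < br s b)).

(* time at which the execution of b starts (head at left boundary of l(b)) *)
Definition bstart (n : nat) (s : 'I_n -> nat) (B : {set 'I_n * 'I_n})
  (b : 'I_n * 'I_n) : nat :=
  (tape_len s - (bl s b - 1)) +
  \sum_(b' in B | exec_before s b' b) 2 * bsize s b'.

(* time at which Phase 2 starts reading g *)
Definition phase2_time (n : nat) (s : 'I_n -> nat) (B : {set 'I_n * 'I_n})
  (g : 'I_n) : nat :=
  tape_len s + \sum_(b in B) 2 * bsize s b + (lpos s g - 1).

(* response time of (the requests for) file g: first start of a rightward  *)
(* reading traversal of g in the schedule of B                              *)
Definition resp (n : nat) (s : 'I_n -> nat) (B : {set 'I_n * 'I_n})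
  (g : 'I_n) : nat :=
  \big[minn/phase2_time s B g]_(b in B | inb s b g)
     (bstart s B b + (lpos s g - bl s b)).

(* v(B1): total response time of the requests R; req r is the file of r *)
Definition total_resp (n : nat) (s : 'I_n -> nat) (R : finType)
  (req : R -> 'I_n) (B : {set 'I_n * 'I_n}) : nat :=
  \sum_(r : R) resp s B (req r).

Definition nreq (n : nat) (R : finType) (req : R -> 'I_n) (f : 'I_n) : nat :=
  #|[set r | req r == f]|.

From mathcomp Require Import all_boot order zify.
Import Order.TTheory.

Set Implicit Arguments.
Unset Strict Implicit.
Unset Printing Implicit Defensive.

(* Dropping the single-file batch (f, f) saves its cost 2 s(f) for every
   request served after it: the requests for files left of f (every batch
   covering such a file is executed after (f, f)) and for files right of f
   covered by no batch (they are read in Phase 2).  No other request gets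
   slower except those for f, which is then read either by another batch
   with left end l(f), no later than before, or in Phase 2, at most
   2 (l(f) - 1 + sum_{l(b) < l(f)} s(b)) later: the return trip to the
   start of the tape plus the batches starting left of f. *)

Lemma leq_sum_subpred (I : finType) (P Q : pred I) (F : I -> nat) :
  (forall i, P i -> Q i) -> \sum_(i | P i) F i <= \sum_(i | Q i) F i.
Proof. exact: (sub_le_big leqnn (fun x y => leq_addr y x)). Qed.

Lemma sum_muln_if (I : finType) (P : pred I) (F : I -> nat) (c : nat) :
  \sum_i F i * (if P i then c else 0) = c * \sum_(i | P i) F i.
Proof.
rewrite (big_mkcond P) big_distrr /=; apply: eq_bigr => i _.
by case: (P i); rewrite ?muln0 // mulnC.
Qed.

Lemma sum_nreq (n : nat) (R : finType) (req : R -> 'I_n) (F : 'I_n -> nat) :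
  \sum_r F (req r) = \sum_g nreq req g * F g.
Proof.
rewrite (partition_big req predT) //=; apply: eq_bigr => g _.
rewrite (eq_bigr (fun=> F g)); last by move=> r /eqP ->.
by rewrite sum_nat_cond_const.
Qed.

Section Tape.
Variables (n : nat) (s : 'I_n -> nat).
Hypothesis s_gt0 : forall i, 0 < s i.

Lemma lpos_add_le (i j : 'I_n) : i < j -> lpos s i + s i <= lpos s j.
Proof.
move=> ij; rewrite /lpos (bigD1 i ij) /= addnCA addnC !leq_add2l.
apply: leq_sum_subpred => k ki; rewrite (ltn_trans ki ij) /=.
by apply: contraTneq ki => ->; rewrite ltnn.
Qed.

Lemma ltn_lpos (i j : 'I_n) : (lpos s i < lpos s j) = (i < j).
Proof.
case: (ltngtP i j) => [ij|ji|/ord_inj ->]; last exact: ltnn.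
- by have := lpos_add_le ij; have := s_gt0 i; lia.
- by have := lpos_add_le ji; have := s_gt0 j; lia.
Qed.

Lemma lpos_inj : injective (lpos s).
Proof.
move=> i j eq_ij; case: (ltngtP i j) => [||/ord_inj //] /lpos_add_le.
- by have := s_gt0 i; lia.
- by have := s_gt0 j; lia.
Qed.

Lemma lpos_le_tape_len (i : 'I_n) : lpos s i <= tape_len s.
Proof.
rewrite /lpos /tape_len [X in _ <= X](bigD1 i) //=; apply: leq_add (s_gt0 i) _.
by apply: leq_sum_subpred => k ki; apply: contraTneq ki => ->; rewrite ltnn.
Qed.

Lemma rpos_mono (i j : 'I_n) : lpos s i <= lpos s j -> rpos s i <= rpos s j.
Proof.
rewrite leq_eqVlt => /orP[/eqP/lpos_inj -> //|].
rewrite /rpos ltn_lpos => /lpos_add_le; have := s_gt0 j; lia.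
Qed.

Lemma bsize_single (h : 'I_n) : bsize s (h, h) = s h.
Proof. by rewrite /bsize /br /bl /rpos /=; have := s_gt0 h; lia. Qed.

Lemma inb_single (h g : 'I_n) : inb s (h, h) g = (g == h).
Proof.
apply/idP/eqP => [|->]; last by rewrite /inb /bl /br /= !leqnn.
rewrite /inb /bl /br /= => /andP[hg gh]; apply: lpos_inj.
move: hg; rewrite leq_eqVlt => /orP[/eqP -> //|].
rewrite ltn_lpos => /lpos_add_le; move: gh; rewrite /rpos.
by have := s_gt0 g; have := s_gt0 h; lia.
Qed.

Lemma exec_before_cover (h : 'I_n) (b b' : 'I_n * 'I_n) :
  inb s b h -> exec_before s b' (h, h) -> exec_before s b' b.
Proof. by rewrite /inb /exec_before /bl /br /=; lia. Qed.

End Tape.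

Section Schedule.
Variables (n : nat) (s : 'I_n -> nat).
Implicit Types (B : {set 'I_n * 'I_n}) (b : 'I_n * 'I_n) (g : 'I_n).

Lemma exec_before_irr b : exec_before s b b = false.
Proof. by rewrite /exec_before !ltnn andbF. Qed.

Lemma resp_le_phase2 B g : resp s B g <= phase2_time s B g.
Proof. by rewrite /resp -leEnat -minEnat bigmin_le_id. Qed.

Lemma resp_le_bstart B b g :
  b \in B -> inb s b g -> resp s B g <= bstart s B b + (lpos s g - bl s b).
Proof.
move=> bB bg; rewrite /resp -leEnat -minEnat.
by apply: (bigmin_le_cond _ (P := fun b => (b \in B) && inb s b g)); rewrite bB.
Qed.

Lemma le_resp B g x :
  x <= phase2_time s B g ->
  (forall b, b \in B -> inb s b g -> x <= bstart s B b + (lpos s g - bl s b)) ->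
  x <= resp s B g.
Proof.
move=> x_phase2 x_bstart; rewrite /resp -leEnat -minEnat.
by apply: le_bigmin => // b /andP[]; exact: x_bstart.
Qed.

Lemma leq_bstart B b1 b2 :
  bl s b2 <= bl s b1 ->
  (forall b', b' \in B -> exec_before s b' b1 -> exec_before s b' b2) ->
  bstart s B b1 <= bstart s B b2.
Proof.
move=> le_bl sub_exec; apply: leq_add; first by apply: leq_sub2l; lia.
by apply: leq_sum_subpred => b' /andP[b'B /(sub_exec _ b'B)]; rewrite b'B.
Qed.

Lemma phase2_time_setD1 B b0 g : b0 \in B ->
  phase2_time s B g = phase2_time s (B :\ b0) g + 2 * bsize s b0.
Proof.
move=> b0B; rewrite /phase2_time (big_setD1 _ b0B) /=.
by move: (\sum_(b in B :\ b0) _) => X; lia.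
Qed.

Lemma bstart_setD1 B b0 b : b0 \in B ->
  bstart s B b =
  bstart s (B :\ b0) b + (if exec_before s b0 b then 2 * bsize s b0 else 0).
Proof.
move=> b0B; rewrite /bstart big_mkcondr (big_setD1 _ b0B) -big_mkcondr /=.
by move: (\sum_(b' in B :\ b0 | _) _) => X; case: ifP; lia.
Qed.

End Schedule.

Section RemoveSingle.
Variables (n : nat) (s : 'I_n -> nat) (B : {set 'I_n * 'I_n}) (f : 'I_n).
Hypotheses (s_gt0 : forall i, 0 < s i) (ffB : (f, f) \in B).

Local Notation B' := (B :\ (f, f)).

Lemma resp_self : resp s B f = bstart s B (f, f).
Proof.
have ff_f : inb s (f, f) f by rewrite (inb_single s_gt0).
apply/eqP; rewrite eqn_leq; apply/andP; split.
  by have := resp_le_bstart ffB ff_f; rewrite /bl subnn addn0.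
apply: le_resp => [|b bB bf].
  have : \sum_(b' in B | exec_before s b' (f, f)) 2 * bsize s b'
         <= \sum_(b' in B) 2 * bsize s b'.
    by apply: leq_sum_subpred => b' /andP[].
  by rewrite /bstart /phase2_time; lia.
apply: leq_trans (leq_addr _ _); apply: leq_bstart => [|b' _].
  by move: bf; rewrite /inb => /andP[].
exact: exec_before_cover.
Qed.

Lemma mem_setD1_cover b g : b \in B -> inb s b g -> g != f -> b \in B'.
Proof.
move=> bB bg; rewrite in_setD1 bB andbT; apply: contraNneq => bff.
by rewrite -(inb_single s_gt0) -bff.
Qed.

Lemma resp_setD1_le g : g != f -> resp s B' g <= resp s B g.
Proof.
move=> gf; apply: le_resp => [|b bB bg].
  rewrite (phase2_time_setD1 _ g ffB).
  exact: leq_trans (resp_le_phase2 s B' g) (leq_addr _ _).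
rewrite (bstart_setD1 _ b ffB) addnAC.
exact: leq_trans (resp_le_bstart (mem_setD1_cover bB bg gf) bg) (leq_addr _ _).
Qed.

Lemma resp_setD1_gain g : (lpos s g < lpos s f) || ~~ inFB s B g ->
  resp s B' g + 2 * s f <= resp s B g.
Proof.
move=> gf_or_free.
have gf : g != f.
  apply: contraTneq gf_or_free => ->; rewrite ltnn negbK.
  by apply/existsP; exists (f, f); rewrite ffB (inb_single s_gt0) eqxx.
apply: le_resp => [|b bB bg].
  rewrite (phase2_time_setD1 _ g ffB) bsize_single // leq_add2r.
  exact: resp_le_phase2.
have lt_gf : lpos s g < lpos s f.
  case/orP: gf_or_free => // /existsP[]; exists b; by rewrite bB.
have ff_b : exec_before s (f, f) b.
  by move: bg lt_gf; rewrite /inb /exec_before /bl /br /=; lia.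
rewrite (bstart_setD1 _ b ffB) ff_b bsize_single // addnAC leq_add2r.
exact: resp_le_bstart (mem_setD1_cover bB bg gf) bg.
Qed.

Hypothesis batch_ordered : forall b, b \in B -> lpos s b.1 <= lpos s b.2.

(* The batch of B' with left end l(f) and least right end covers f and is
   preceded only by batches of B' that preceded (f, f). *)
Lemma resp_setD1_self_batch b0 : b0 \in B' -> bl s b0 = lpos s f ->
  resp s B' f <= resp s B f.
Proof.
move=> b0B' b0f.
pose P := [pred b | (b \in B') && (bl s b == lpos s f)].
have Pb0 : P b0 by rewrite /= b0B' b0f eqxx.
case: (arg_minnP (br s) Pb0) => bm /andP[bmB' /eqP bmf] bm_min.
have bm_f : inb s bm f.
  rewrite /inb bmf leqnn /br; apply: rpos_mono => //; rewrite -bmf /bl.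
  by apply: batch_ordered; move: bmB'; rewrite in_setD1 => /andP[].
rewrite resp_self (bstart_setD1 _ _ ffB) exec_before_irr addn0.
apply: leq_trans (resp_le_bstart bmB' bm_f) _; rewrite bmf subnn addn0.
apply: leq_bstart => [|b' b'B' b'_bm]; first by rewrite bmf.
have := bm_min b'; rewrite /= b'B' /=.
by move: b'_bm bmf; rewrite /exec_before /bl /br /=; lia.
Qed.

Lemma resp_setD1_self_phase2 : (forall b, b \in B' -> bl s b != lpos s f) ->
  resp s B' f <=
  resp s B f + 2 * (lpos s f - 1 + \sum_(b in B | bl s b < lpos s f) bsize s b).
Proof.
move=> no_bl.
have split_B' : \sum_(b in B') 2 * bsize s b <=
    \sum_(b in B' | exec_before s b (f, f)) 2 * bsize s b
  + \sum_(b in B' | bl s b < lpos s f) 2 * bsize s b.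
  rewrite !big_mkcondr -big_split /=; apply: leq_sum => b bB'.
  have := no_bl b bB'; rewrite /exec_before /bl /br /=.
  by case: ifP; case: ifP; lia.
have left_B' : \sum_(b in B' | bl s b < lpos s f) 2 * bsize s b <=
    2 * \sum_(b in B | bl s b < lpos s f) bsize s b.
  by rewrite big_distrr; apply: leq_sum_subpred => b /andP[/setD1P[_ ->] ->].
have := resp_le_phase2 s B' f; have := lpos_le_tape_len s_gt0 f.
rewrite resp_self (bstart_setD1 _ _ ffB) exec_before_irr addn0.
by rewrite /bstart /phase2_time -[bl s (f, f)]/(lpos s f); lia.
Qed.

Lemma resp_setD1_self :
  resp s B' f <=
  resp s B f + 2 * (lpos s f - 1 + \sum_(b in B | bl s b < lpos s f) bsize s b).
Proof.
case: (boolP [exists b in B', bl s b == lpos s f]).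
  case/existsP=> b /andP[bB' /eqP bf].
  exact: leq_trans (resp_setD1_self_batch bB' bf) (leq_addr _ _).
move=> no_bl; apply: resp_setD1_self_phase2 => b bB'.
by apply: contraNneq no_bl => bf; apply/existsP; exists b; rewrite bB' bf eqxx.
Qed.

Lemma resp_setD1_bound g :
  resp s B' g + (if lpos s g < lpos s f then 2 * s f else 0)
              + (if ~~ inFB s B g && (lpos s f < lpos s g) then 2 * s f else 0)
  <= resp s B g + (if g == f then
       2 * (lpos s f - 1 + \sum_(b in B | bl s b < lpos s f) bsize s b) else 0).
Proof.
case: (eqVneq g f) => [->|gf].
  by rewrite ltnn andbF !addn0 resp_setD1_self.
rewrite addn0; case: ifP => [lt_gf|ge_gf].
  have -> : lpos s f < lpos s g = false by apply/negbTE; rewrite -leqNgt ltnW.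
  by rewrite andbF addn0 resp_setD1_gain ?lt_gf.
case: ifP => [/andP[free _]|_]; last by rewrite !addn0 resp_setD1_le.
by rewrite addn0 resp_setD1_gain ?free ?orbT.
Qed.

Lemma total_resp_setD1 (R : finType) (req : R -> 'I_n) :
  total_resp s req B' + 2 * s f *
    (\sum_(g | lpos s g < lpos s f) nreq req g
     + \sum_(g | ~~ inFB s B g && (lpos s f < lpos s g)) nreq req g)
  <= total_resp s req B + 2 * (lpos s f - 1
       + \sum_(b in B | bl s b < lpos s f) bsize s b) * nreq req f.
Proof.
have nreq_f c : c * nreq req f = \sum_g nreq req g * (if g == f then c else 0).
  by rewrite sum_muln_if big_pred1_eq.
rewrite /total_resp !sum_nreq mulnDr -!sum_muln_if nreq_f -!big_split /=.
apply: leq_sum => g _.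
by rewrite -!mulnDr leq_mul2l addnA resp_setD1_bound orbT.
Qed.

End RemoveSingle.

Theorem corollary4 (n : nat) (s : 'I_n -> nat) (Hs : forall i, 0 < s i)
  (R : finType) (req : R -> 'I_n) (B : {set 'I_n * 'I_n})
  (HB : forall b, b \in B -> lpos s b.1 <= lpos s b.2)
  (f : 'I_n) (Hf : (f, f) \in B) :
  nreq req f * (lpos s f + \sum_(b in B | bl s b < lpos s f) bsize s b)
  < s f * (\sum_(g : 'I_n | lpos s g < lpos s f) nreq req g
           + \sum_(g : 'I_n | ~~ inFB s B g && (lpos s f < lpos s g)) nreq req g) ->
  total_resp s req (B :\ (f, f)) < total_resp s req B.
Proof.
move=> gain_gt_loss.
have loss_lt_gain :
  2 * (lpos s f - 1 + \sum_(b in B | bl s b < lpos s f) bsize s b) * nreq req f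
  < 2 * s f * (\sum_(g | lpos s g < lpos s f) nreq req g
     + \sum_(g | ~~ inFB s B g && (lpos s f < lpos s g)) nreq req g).
  rewrite -!mulnA ltn_pmul2l // mulnC; apply: leq_ltn_trans gain_gt_loss.
  by rewrite leq_mul2l leq_add2r leq_subr orbT.
move: loss_lt_gain (total_resp_setD1 Hs Hf HB req).
by move: (2 * (_ - 1 + _) * _) (2 * s f * _) => loss gain; lia.
Qed.
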